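(* Let $d,n \ge 1$ be fixed integers and let $C>0$. There is a constant $c>0$, independent of $q$, such that for every finite field $\mathbb{F}_q$ and every subset $E \subseteq \mathbb{F}_q^d$ which contains at least a proportion $C$ of all translation classes of $n$-configurations in $\mathbb{F}_q^d$, one has $|E| \ge c\, q^{d(1-\frac{1}{n})}$. In particular, a subset $E \subseteq \mathbb{F}_q^2$ of size of order of magnitude less than $q^{4/3}$ does not contain a positive proportion of translation classes of triangles in $\mathbb{F}_q^2$.
   Context: An $n$-configuration in $\mathbb{F}_q^d$ is an ordered $n$-tuple $(x_1,\dots,x_n)$ of points of $\mathbb{F}_q^d$; a triangle is a $3$-configuration. Two $n$-configurations are in the same translation class if there is $a \in \mathbb{F}_q^d$ with $y_i = x_i + a$ for all $i$. There are $q^{d(n-1)}$ translation classes. $E$ contains a translation class if some $n$-configuration with all entries in $E$ lies in that class. *)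

From HB Require Import structures.
From mathcomp Require Import all_boot all_order all_algebra.
From Stdlib Require Import Reals.
Set Implicit Arguments. Unset Strict Implicit. Unset Printing Implicit Defensive.
Import GRing.Theory.
Local Open Scope ring_scope.

Definition config (F : finFieldType) (d n : nat) := {ffun 'I_n -> 'rV[F]_d}.

Definition transl_class (F : finFieldType) (d n : nat) (x : config F d n)
  : {set config F d n} :=
  [set y : config F d n | [exists a : 'rV[F]_d, [forall i, y i == x i + a]]].

Definition all_classes (F : finFieldType) (d n : nat) : {set {set config F d n}} :=
  [set transl_class x | x : config F d n].

Definition classes_in (F : finFieldType) (d n : nat) (E : {set 'rV[F]_d})
  : {set {set config F d n}} :=
  [set transl_class x | x : config F d n & [forall i, x i \in E]].

(* A configuration is determined by its translation class together with its
   first point, so there are at least q^(d(n-1)) classes; on the other hand E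
   meets at most |E|^n of them.  Hence C q^(d(n-1)) <= |E|^n, and taking n-th
   roots gives |E| >= C^(1/n) q^(d(1-1/n)) >= min(C,1) q^(d(1-1/n)). *)
From HB Require Import structures.
From mathcomp Require Import all_boot all_order all_algebra.
From Stdlib Require Import Reals Lra Psatz.

Set Implicit Arguments.
Unset Strict Implicit.

Section TranslationClasses.
Import GRing.Theory.
Local Open Scope ring_scope.

Variables (F : finFieldType) (d n : nat).

Lemma transl_class_refl (x : config F d n) : x \in transl_class x.
Proof. by rewrite inE; apply/existsP; exists 0; apply/forallP => i; rewrite addr0. Qed.

Lemma transl_class_inj_at (i0 : 'I_n) (x y : config F d n) :
  transl_class x = transl_class y -> x i0 = y i0 -> x = y.
Proof.
move=> eq_xy eq_x0; have := transl_class_refl x.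
rewrite eq_xy inE => /existsP[a /forallP xy_a].
have a0 : a = 0.
  by have /eqP := xy_a i0; rewrite -eq_x0 -{1}[x i0]addr0 => /addrI.
by apply/ffunP => i; rewrite (eqP (xy_a i)) a0 addr0.
Qed.

Lemma card_config_le_classes (i0 : 'I_n) :
  (#|{: config F d n}| <= #|all_classes F d n| * #|{: 'rV[F]_d}|)%nat.
Proof.
have mem_all x : transl_class x \in all_classes F d n by apply: imset_f.
pose class_and_point (x : config F d n) :=
  (exist (fun c => c \in all_classes F d n) (transl_class x) (mem_all x), x i0).
have inj_cp : injective class_and_point.
  by move=> x y [eq_xy eq_x0]; exact: transl_class_inj_at eq_xy eq_x0.
by have := leq_card _ inj_cp; rewrite card_prod card_sig.
Qed.

Lemma card_classes_in_le (E : {set 'rV[F]_d}) : (#|classes_in n E| <= expn #|E| n)%nat.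
Proof.
apply: leq_trans (leq_imset_card _ _) _.
rewrite -[n in expn _ n]card_ord -card_ffun_on.
by apply: subset_leq_card; apply/subsetP => x; rewrite inE => /forallP/ffun_onP.
Qed.

End TranslationClasses.

Lemma INR_expn (m k : nat) : INR (expn m k) = (INR m ^ k)%R.
Proof. by elim: k => [|k IH] //; rewrite expnS -multE mult_INR IH. Qed.

Local Open Scope R_scope.

Lemma pow_lt_compat_l (x y : R) (k : nat) :
  0 <= x -> x < y -> (0 < k)%nat -> x ^ k < y ^ k.
Proof.
move=> x_ge0 lt_xy; case: k => [|k] // _; elim: k => [|k IH]; first by rewrite !pow_1.
change (x * x ^ k.+1 < y * y ^ k.+1).
have := pow_le x k.+1 x_ge0; nra.
Qed.

Lemma pow_le_reg_l (x y : R) (k : nat) :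
  0 <= y -> (0 < k)%nat -> x ^ k <= y ^ k -> x <= y.
Proof.
move=> y_ge0 k_gt0 le_pow; apply: Rnot_lt_le => lt_yx.
by have := pow_lt_compat_l y_ge0 lt_yx k_gt0; lra.
Qed.

Lemma Rmin_1_pow_le (C : R) (k : nat) : 0 < C -> (0 < k)%nat -> Rmin C 1 ^ k <= C.
Proof.
move=> C_gt0; case: k => // k _; rewrite [_ ^ _]/=.
have c_bnd : 0 <= Rmin C 1 <= 1 by split; [apply: Rmin_glb|apply: Rmin_r]; lra.
have := Rmin_l C 1; have := pow_incr _ _ k c_bnd; rewrite pow1.
have := pow_le _ k (proj1 c_bnd); nra.
Qed.

Lemma Rpower_root_mul_pow (q : R) (d n : nat) : 0 < q -> (0 < n)%nat ->
  Rpower q (INR d * (1 - / INR n)) ^ n * q ^ d = q ^ (d * n).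
Proof.
move=> q_gt0 n_gt0; have n_neq0 : INR n <> 0 by apply: not_0_INR; case: n n_gt0.
have r_gt0 : 0 < Rpower q (INR d * (1 - / INR n)) by apply: exp_pos.
rewrite -(Rpower_pow n _ r_gt0) -!Rpower_pow // Rpower_mult -Rpower_plus mult_INR.
by congr Rpower; field.
Qed.

Lemma Rpower_root_le_card_all_classes (F : finFieldType) (d n : nat) :
  (0 < n)%nat ->
  Rpower (INR #|F|) (INR d * (1 - / INR n)) ^ n <= INR #|all_classes F d n|.
Proof.
move=> n_gt0; have q_gt0 : 0 < INR #|F|.
  by apply: lt_0_INR; apply/ltP/card_gt0P; exists (@GRing.zero F).
have card_ineq := card_config_le_classes F d (Ordinal n_gt0).
rewrite card_ffun card_mx card_ord mul1n -expnM in card_ineq.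
apply: (Rmult_le_reg_r (INR #|F| ^ d)); first exact: pow_lt.
rewrite Rpower_root_mul_pow // -!INR_expn -mult_INR.
exact/le_INR/leP/card_ineq.
Qed.

Theorem theorem1p3 (d n : nat) (C : R) :
  (1 <= d)%nat -> (1 <= n)%nat -> (0 < C)%R ->
  exists c : R, (0 < c)%R /\
    forall (F : finFieldType) (E : {set 'rV[F]_d}),
      (C * INR #|all_classes F d n| <= INR #|classes_in n E|)%R ->
      (c * Rpower (INR #|F|) (INR d * (1 - / INR n)) <= INR #|E|)%R.
Proof.
move=> _ n_gt0 C_gt0; have c_gt0 : 0 < Rmin C 1 by apply: Rmin_pos; lra.
exists (Rmin C 1); split => // F E dense_E.
set r := Rpower _ _.
have r_bound : r ^ n <= INR #|all_classes F d n|
  := Rpower_root_le_card_all_classes F d n_gt0.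
have c_bound := Rmin_1_pow_le C_gt0 n_gt0.
have E_bound : INR #|classes_in n E| <= INR #|E| ^ n.
  by rewrite -INR_expn; apply/le_INR/leP/card_classes_in_le.
apply: (pow_le_reg_l (pos_INR _) n_gt0); rewrite Rpow_mult_distr.
have := Rmult_le_compat_r _ _ _ (pow_le r n (Rlt_le _ _ (exp_pos _))) c_bound.
have := Rmult_le_compat_l _ _ _ (Rlt_le _ _ C_gt0) r_bound.
lra.
Qed.
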